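(* Let $n\ge 3$ and let $\pi\in S_n$ be a shallow permutation avoiding $132$. If $\pi_j=n$ with $2\le j\le n-1$, then $\pi_n=1$. If $\pi_j=n$ with $2\le j\le n-2$, then $\pi_1=n-1$.
   Context: For $\pi\in S_n$: $D(\pi)=\sum_{i}|\pi_i-i|$, $I(\pi)$ is the number of inversions, $T(\pi)=n-\mathrm{cyc}(\pi)$ with $\mathrm{cyc}$ the number of cycles in the disjoint cycle decomposition; $\pi$ is shallow if $I(\pi)+T(\pi)=D(\pi)$. A permutation avoids a pattern $\sigma$ if it has no subsequence order-isomorphic to $\sigma$. *)

From mathcomp Require Import all_boot all_order all_fingroup.
Set Implicit Arguments. Unset Strict Implicit. Unset Printing Implicit Defensive.

(* Permutations of {1..n} are modelled as s : 'S_n acting on 'I_n = {0..n-1};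
   position i (1-based) corresponds to ordinal i-1 and value pi_i to (s (i-1)) + 1.
   All quantities below are invariant under this uniform shift. *)

Definition displacement n (s : 'S_n) : nat :=
  \sum_(i : 'I_n) (((s i : nat) - (i : nat)) + ((i : nat) - (s i : nat))).

Definition inversions n (s : 'S_n) : nat :=
  #|[set p : 'I_n * 'I_n | (p.1 < p.2) && (s p.2 < s p.1)]|.

Definition ncycles n (s : 'S_n) : nat := #|porbits s|.

Definition tdepth n (s : 'S_n) : nat := n - ncycles s.

Definition shallow n (s : 'S_n) : bool :=
  inversions s + tdepth s == displacement s.

Definition avoids132 n (s : 'S_n) : bool :=
  ~~ [exists i : 'I_n, exists j : 'I_n, exists k : 'I_n,
        [&& i < j, j < k, s i < s k & s k < s j]].

From mathcomp Require Import all_boot all_order all_fingroup.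
From mathcomp Require Import zify.
Set Implicit Arguments. Unset Strict Implicit. Unset Printing Implicit Defensive.

(* Let p be the largest non-fixed point of s, s j = p with j < p, and u = (j p) s, so
   that u fixes p. Then T drops by 1, I drops by 1 + 2A, where A counts the positions
   strictly between j and p carrying a value above s p, and D drops by
   2 min(p - j, p - s p). Since A < min(p - j, p - s p), induction gives the
   Diaconis-Graham inequality I + T <= D, and for a shallow s equality is forced:
   u is shallow again and A = min(p - j, p - s p) - 1. The latter fails as soon as
   some position between j and p carries a value below s p while some position outside
   carries a value between s p and p. When pi avoids 132 and n sits at an interior
   position, such a configuration arises unless pi_n = 1; after transposing, the same
   argument one level down applied to the position of n - 1 forces pi_1 = n - 1. *)

Lemma sum_nat_between (a b N : nat) :
  \sum_(k < N) ((a < k < b) : nat) = minn b N - a.+1.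
Proof.
elim: N => [|N IH]; first by rewrite big_ord0 minn0.
by rewrite big_ord_recr /= IH; case: (ltnP a N) => ?; case: (ltnP N b) => ? /=; lia.
Qed.

Section TwoPointSums.
Variable n : nat.
Variables j p : 'I_n.
Hypothesis neq_jp : j != p.

Lemma bigD2 (F : 'I_n -> nat) :
  \sum_x F x = F j + F p + \sum_(x | (x != j) && (x != p)) F x.
Proof.
rewrite (bigD1 j) //= (bigD1 p) 1?eq_sym //= addnA.
by congr (_ + _); apply: eq_bigl => i; rewrite andbC.
Qed.

Lemma double_bigD2 (G : 'I_n -> 'I_n -> nat) :
  \sum_x \sum_y G x y = G j j + G p j + G j p + G p p
   + \sum_(y | (y != j) && (y != p)) (G y j + G y p + G j y + G p y)
   + \sum_(x | (x != j) && (x != p)) \sum_(y | (y != j) && (y != p)) G x y.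
Proof.
under eq_bigr => x _ do rewrite (bigD2 (G x)).
rewrite !big_split /= (bigD2 (G^~ j)) (bigD2 (G^~ p)).
rewrite (bigD2 (fun x => \sum_(y | (y != j) && (y != p)) G x y)) /=; lia.
Qed.

Lemma double_sum_eq_off_two_points (G H : 'I_n -> 'I_n -> nat) (K : 'I_n -> nat) c :
  (forall x y, x != j -> x != p -> y != j -> y != p -> G x y = H x y) ->
  (forall y, y != j -> y != p ->
     G y j + G y p + G j y + G p y = H y j + H y p + H j y + H p y + 2 * K y) ->
  G j j + G p j + G j p + G p p = H j j + H p j + H j p + H p p + c ->
  \sum_x \sum_y G x y
    = \sum_x \sum_y H x y + c + 2 * \sum_(y | (y != j) && (y != p)) K y.
Proof.
move=> GH_off GH_cross GH_jp; rewrite !double_bigD2.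
have -> : \sum_(x | (x != j) && (x != p)) \sum_(y | (y != j) && (y != p)) G x y
        = \sum_(x | (x != j) && (x != p)) \sum_(y | (y != j) && (y != p)) H x y.
  by apply: eq_bigr => x /andP[? ?]; apply: eq_bigr => y /andP[? ?]; apply: GH_off.
rewrite (eq_bigr (fun y => H y j + H y p + H j y + H p y + 2 * K y)); last first.
  by move=> y /andP[? ?]; apply: GH_cross.
rewrite big_split /= -big_distrr /=; lia.
Qed.

End TwoPointSums.

Lemma inversionsE n (s : 'S_n) :
  inversions s = \sum_(x : 'I_n) \sum_(y : 'I_n) ((x < y) && (s y < s x) : nat).
Proof.
rewrite /inversions pair_big /= -sum1_card big_mkcond /=.
by apply: eq_bigr => q _; rewrite inE; case: (_ && _).
Qed.

Lemma inversion_indicators_tperm (y j p a m : nat) :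
  j < p -> m < p -> a != p -> a != m -> y != j -> y != p ->
  (j < y < p -> a < p) ->
  (y < j) && (p < a) + (y < p) && (m < a) + (j < y) && (a < p) + (p < y) && (a < m)
  = (y < j) && (m < a) + (y < p) && (p < a) + (j < y) && (a < m) + (p < y) && (a < p)
    + 2 * ((j < y < p) && (m < a)).
Proof.
move=> *; case: (ltnP y j) => ?; case: (ltnP p a) => ?; case: (ltnP y p) => ?;
case: (ltnP m a) => ?; case: (ltnP j y) => ?; case: (ltnP a p) => ?;
case: (ltnP p y) => ?; case: (ltnP a m) => ? /=; lia.
Qed.

Section TransposeTopValue.
Variable n : nat.
Variables (s : 'S_n) (j p : 'I_n).
Hypotheses (lt_jp : j < p) (sj : s j = p) (s_fix : forall k : 'I_n, p < k -> s k = k).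

Local Notation u := (tperm j p * s)%g.
Local Notation m := (s p).
Local Notation A := (\sum_(k : 'I_n) ((j < k < p) && (m < s k) : nat)).

Let neq_jp : j != p. Proof. by rewrite neq_ltn lt_jp. Qed.

Let uE x : u x = s (tperm j p x). Proof. by rewrite permM. Qed.
Let uj : u j = m. Proof. by rewrite uE tpermL. Qed.
Let up : u p = p. Proof. by rewrite uE tpermR. Qed.
Let u_off x : x != j -> x != p -> u x = s x.
Proof. by move=> ? ?; rewrite uE tpermD // eq_sym. Qed.

Lemma perm_le_top (k : 'I_n) : k <= p -> s k <= p.
Proof.
move=> le_kp; rewrite leqNgt; apply/negP => lt_p_sk.
have ek : k = s k by apply: (@perm_inj _ s); rewrite (s_fix lt_p_sk).
by move: lt_p_sk; rewrite -ek ltnNge le_kp.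
Qed.

Lemma perm_lt_top (k : 'I_n) : k <= p -> k != j -> s k < p.
Proof.
move=> le_kp neq_kj; rewrite ltn_neqAle perm_le_top // andbT.
by apply: contra neq_kj => /eqP/val_inj; rewrite -sj => /perm_inj ->.
Qed.

Lemma lt_top_last_value : m < p.
Proof. by rewrite perm_lt_top // eq_sym. Qed.

Lemma tperm_fix_from_top (i : 'I_n) : p <= i -> u i = i.
Proof.
rewrite leq_eqVlt => /orP[/eqP/val_inj <- // | lt_pi].
by rewrite u_off ?s_fix // neq_ltn ?lt_pi ?(ltn_trans lt_jp lt_pi) orbT.
Qed.

Lemma displacement_tperm :
  displacement s + ((m - j) + (j - m)) = displacement u + (p - j) + (p - m).
Proof.
rewrite /displacement (bigD2 neq_jp) [in RHS](bigD2 neq_jp) /= uj up sj.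
have -> : \sum_(x | (x != j) && (x != p)) ((u x : nat) - x + (x - u x)) =
          \sum_(x | (x != j) && (x != p)) ((s x : nat) - x + (x - s x)).
  by apply: eq_bigr => x /andP[? ?]; rewrite u_off.
have := lt_top_last_value; have := lt_jp; move: (\sum_(x < n | _) _) => S.
(* [set] merges differently elaborated copies of [s p], which lia would see as distinct atoms. *)
set m' := nat_of_ord (s p); lia.
Qed.

Lemma inversions_tperm : inversions s = inversions u + 1 + 2 * A.
Proof.
have m_lt_p := lt_top_last_value.
rewrite !inversionsE (@double_sum_eq_off_two_points _ _ _ neq_jp
  (fun x y : 'I_n => (x < y) && (s y < s x) : nat)
  (fun x y : 'I_n => (x < y) && (u y < u x) : nat)
  (fun y : 'I_n => (j < y < p) && (m < s y) : nat) 1).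
- by rewrite [A](bigD2 neq_jp) /= !ltnn andbF.
- by move=> x y *; rewrite !u_off.
- move=> y neq_yj neq_yp; rewrite uj up (u_off neq_yj neq_yp) sj.
  apply: inversion_indicators_tperm => //.
  + by rewrite -sj; apply: contra neq_yj => /eqP/val_inj/perm_inj ->.
  + by apply: contra neq_yp => /eqP/val_inj/perm_inj ->.
  + by case/andP=> _ /ltnW le_yp; apply: perm_lt_top.
- by rewrite uj up sj !ltnn (ltnNge p j) (ltnW lt_jp) lt_jp (ltnNge p m) (ltnW m_lt_p) m_lt_p.
Qed.

Lemma tdepth_tperm : tdepth s = tdepth u + 1.
Proof.
have j_in : j \in porbit s p.
  by rewrite porbit_sym -sj -{1}[s j]/((s ^+ 1)%g j) mem_porbit.
have := porbits_mul_tperm s j p; rewrite neq_jp j_in /= addn0 => ncyc_u.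
have : ncycles u <= n by rewrite /ncycles (leq_trans (leq_imset_card _ _)) ?card_ord.
rewrite /tdepth /ncycles ncyc_u; set c := #|porbits s|; lia.
Qed.

Lemma count_between_above :
  A + \sum_(k : 'I_n) ((j < k < p) && ~~ (m < s k) : nat) = p - j.+1.
Proof.
rewrite -big_split /= -[in RHS](minn_idPl (ltnW (ltn_ord p))) -sum_nat_between.
by apply: eq_bigr => k _; case: (m < s k); rewrite ?andbT ?andbF ?addn0.
Qed.

Lemma count_values_above :
  A + \sum_(k : 'I_n) (~~ (j < k < p) && (m < s k < p) : nat) <= p - m.+1.
Proof.
rewrite -big_split /= -[in X in _ <= X](minn_idPl (ltnW (ltn_ord p))) -sum_nat_between.
rewrite [X in _ <= X](reindex_inj (@perm_inj _ s)) /=; apply: leq_sum => k _.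
case between_k: (j < k < p) => /=; last by rewrite add0n.
case/andP: between_k => lt_jk /ltnW le_kp.
by rewrite perm_lt_top ?andbT ?addn0 // neq_ltn lt_jk orbT.
Qed.

End TransposeTopValue.

Lemma inversions1 n : inversions (1 : 'S_n) = 0.
Proof.
rewrite inversionsE big1 // => x _; rewrite big1 // => y _; rewrite !perm1.
by case: ltnP => //= /ltnW; rewrite ltnNge => ->.
Qed.

Lemma tdepth1 n : tdepth (1 : 'S_n) = 0.
Proof.
have porbit1 x : porbit (1 : 'S_n) x = [set x].
  apply/setP => y; rewrite inE; apply/porbitP/eqP => [[i ->]|->].
    by rewrite expg1n perm1.
  by exists 0; rewrite expg0 perm1.
rewrite /tdepth /ncycles /porbits (eq_imset _ porbit1) card_imset ?card_ord ?subnn //.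
exact: set1_inj.
Qed.

Lemma displacement1 n : displacement (1 : 'S_n) = 0.
Proof. by rewrite /displacement big1 // => i _; rewrite perm1 subnn. Qed.

Lemma inversions_tdepth_le_displacement n (s : 'S_n) :
  inversions s + tdepth s <= displacement s.
Proof.
suff: forall k (s : 'S_n), (forall i : 'I_n, k <= i -> s i = i) ->
    inversions s + tdepth s <= displacement s.
  by move/(_ n); apply=> i; rewrite leqNgt ltn_ord.
clear s; elim=> [|k IH] s s_fix.
  have -> : s = 1%g by apply/permP => i; rewrite perm1 s_fix.
  by rewrite inversions1 tdepth1 displacement1.
have [lt_kn | ?] := ltnP k n; last by apply: IH => i ?; have := ltn_ord i; lia.
pose p := Ordinal lt_kn.
have s_fix_p (i : 'I_n) : p < i -> s i = i by apply: s_fix.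
have [sp | sp_neq] := eqVneq (s p) p.
  apply: IH => i; rewrite leq_eqVlt => /orP[/eqP ki | ]; last exact: s_fix.
  by rewrite (_ : i = p) //; apply: val_inj.
pose j := (s^-1 p)%g; have sj : s j = p by rewrite permKV.
have lt_jp : j < p.
  rewrite ltn_neqAle; apply/andP; split.
    by apply: contra sp_neq => /eqP/val_inj ej; rewrite -{1}ej sj.
  rewrite leqNgt; apply/negP => lt_pj.
  by have := s_fix_p _ lt_pj; rewrite sj => ej; rewrite -ej ltnn in lt_pj.
have := IH _ (tperm_fix_from_top lt_jp sj s_fix_p).
have := displacement_tperm lt_jp sj s_fix_p.
have := inversions_tperm lt_jp sj s_fix_p.
have := tdepth_tperm lt_jp sj.
have := count_between_above s j p.
have := count_values_above sj s_fix_p.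
have := lt_top_last_value lt_jp sj s_fix_p.
set m := nat_of_ord (s p); lia.
Qed.

Section ShallowTransposeTopValue.
Variable n : nat.
Variables (s : 'S_n) (j p : 'I_n).
Hypotheses (lt_jp : j < p) (sj : s j = p) (s_fix : forall k : 'I_n, p < k -> s k = k).
Hypothesis shallow_s : shallow s.

Local Notation u := (tperm j p * s)%g.

Let m_lt_p := lt_top_last_value lt_jp sj s_fix.
Let D_u := displacement_tperm lt_jp sj s_fix.
Let I_u := inversions_tperm lt_jp sj s_fix.
Let T_u := tdepth_tperm lt_jp sj.
Let count_pos := count_between_above s j p.
Let count_val := count_values_above sj s_fix.
Let DG_u := inversions_tdepth_le_displacement u.

Lemma shallow_tperm : shallow u.
Proof.
move: shallow_s; rewrite /shallow => /eqP shallow_eq; apply/eqP.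
move: shallow_eq m_lt_p D_u I_u T_u count_pos count_val DG_u.
set m := nat_of_ord (s p); lia.
Qed.

Lemma shallow_no_split (k i : 'I_n) :
  j < k < p -> s k < s p -> ~~ (j < i < p) -> s p < s i < p -> False.
Proof.
move=> between_k lt_sk_sp outside_i between_si.
have : 0 < \sum_(x : 'I_n) ((j < x < p) && ~~ (s p < s x) : nat).
  by rewrite (bigD1 k) //= between_k -leqNgt (ltnW lt_sk_sp).
have : 0 < \sum_(x : 'I_n) (~~ (j < x < p) && (s p < s x < p) : nat).
  by rewrite (bigD1 i) //= outside_i between_si.
move: shallow_s; rewrite /shallow => /eqP; move: m_lt_p D_u I_u T_u count_pos count_val DG_u.
set m := nat_of_ord (s p); lia.
Qed.

End ShallowTransposeTopValue.

Lemma eq_perm_val n (s : 'S_n) (a b : 'I_n) : ((s a : nat) == s b) = (a == b).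
Proof. by rewrite (inj_eq val_inj) (inj_eq perm_inj). Qed.

Lemma avoids132_no_pattern n (s : 'S_n) (a b c : 'I_n) :
  avoids132 s -> a < b -> b < c -> s a < s c -> s c < s b -> False.
Proof.
move=> /negP av *; apply: av.
by apply/existsP; exists a; apply/existsP; exists b; apply/existsP; exists c; apply/and4P.
Qed.

Lemma nat_neq_ord n (a b : 'I_n) : (a : nat) != b -> a != b.
Proof. by apply: contra_neq => ->. Qed.

Section Shallow132.
Variables (n : nat) (s : 'S_n) (z p : 'I_n).
Hypotheses (shallow_s : shallow s) (avoid_s : avoids132 s).
Hypotheses (z0 : z = 0 :> nat) (p_last : p = n.-1 :> nat).

Let p_fix (k : 'I_n) : p < k -> s k = k.
Proof. by have := ltn_ord k; lia. Qed.

Let lt_last_value (j k : 'I_n) : s j = p -> k != j -> s k < p.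
Proof. by move=> sj; apply: (perm_lt_top sj p_fix); have := ltn_ord k; lia. Qed.

Lemma shallow132_last_value (j : 'I_n) : s j = p -> 0 < j < p -> s p = 0 :> nat.
Proof.
move=> sj /andP[j_gt0 lt_jp]; case: (posnP (s p)) => // sp_gt0; exfalso.
have sp_lt_p := lt_top_last_value lt_jp sj p_fix.
have [neq_zj neq_zp] : z != j /\ z != p by split; apply: nat_neq_ord; lia.
pose k := (s^-1 z)%g; have sk : s k = z by rewrite permKV.
have [neq_kj neq_kp] : (k : nat) != j /\ (k : nat) != p.
  by split; apply/eqP => /ord_inj ek; move: sk; rewrite ek ?sj => /(congr1 (@nat_of_ord _)); lia.
have sp_lt_sz : s p < s z.
  case: ltngtP => // [lt_szp | /ord_inj/perm_inj ezp]; last by rewrite ezp eqxx in neq_zp.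
  by exfalso; apply: (avoids132_no_pattern avoid_s _ lt_jp lt_szp); rewrite ?z0 ?sj.
have lt_jk : j < k.
  case: ltngtP => // [lt_kj | ekj]; last by rewrite ekj eqxx in neq_kj.
  by exfalso; apply: (avoids132_no_pattern avoid_s lt_kj lt_jp); rewrite ?sk ?sj ?z0.
apply: (shallow_no_split lt_jp sj p_fix shallow_s (k := k) (i := z)).
- by rewrite lt_jk ltn_neqAle neq_kp /=; have := ltn_ord k; lia.
- by rewrite sk z0.
- by rewrite z0 ltnNge leq0n.
- by rewrite sp_lt_sz (lt_last_value sj).
Qed.

Lemma shallow132_first_value (j q : 'I_n) :
  q = n - 2 :> nat -> s j = p -> 0 < j < q -> s z = q :> nat.
Proof.
move=> q_def sj /andP[j_gt0 lt_jq].
have lt_jp : j < p by lia.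
have lt_qp : q < p by lia.
have sp0 : s p = 0 :> nat by apply: (shallow132_last_value sj); rewrite j_gt0.
have [neq_qj neq_qp neq_zj neq_zp neq_qz] : [/\ q != j, q != p, z != j, z != p & q != z].
  by split; apply: nat_neq_ord; lia.
have shallow_u := shallow_tperm lt_jp sj p_fix shallow_s.
set u := (tperm j p * s)%g in shallow_u.
have u_off x : x != j -> x != p -> u x = s x by move=> ? ?; rewrite permM tpermD // eq_sym.
case: (eqVneq (s z : nat) q) => // neq_szq; exfalso.
pose k := (s^-1 q)%g; have sk : s k = q by rewrite permKV.
have [neq_kj neq_kp] : (k : nat) != j /\ (k : nat) != p.
  by split; apply/eqP => /ord_inj ek; move: sk; rewrite ek ?sj => /(congr1 (@nat_of_ord _)); lia.
have sz_lt_q : s z < q by have := lt_last_value sj neq_zj; lia.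
have lt_kj : k < j.
  case: ltngtP => // [lt_jk | ekj]; last by rewrite ekj eqxx in neq_kj.
  by exfalso; apply: (avoids132_no_pattern avoid_s (a := z) _ lt_jk); rewrite ?z0 ?sk ?sj.
have sq_lt_sz : s q < s z.
  case: ltngtP => // [lt_szq | /ord_inj/perm_inj eqz]; last by rewrite eqz eqxx in neq_qz.
  exfalso; apply: (avoids132_no_pattern avoid_s _ lt_jq lt_szq); rewrite ?z0 ?sj //.
  exact: lt_last_value sj neq_qj.
apply: (@shallow_no_split _ u k q _ _ _ shallow_u j z).
- exact: ltn_trans lt_kj lt_jq.
- by rewrite u_off ?sk //; apply: nat_neq_ord.
- move=> i lt_qi; have -> : i = p by apply: ord_inj; have := ltn_ord i; lia.
  by rewrite permM tpermR sj.
- by rewrite lt_kj lt_jq.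
- by rewrite permM tpermL u_off // sp0 lt0n -sp0 eq_perm_val.
- by rewrite z0 ltnNge leq0n.
- by rewrite !u_off // sq_lt_sz sz_lt_q.
Qed.
End Shallow132.

Theorem lemma3p2 (n : nat) (s : 'S_n) :
  3 <= n -> shallow s -> avoids132 s ->
  (forall j : 'I_n, (s j : nat) = n.-1 -> 1 <= (j : nat) <= n - 2 ->
     forall k : 'I_n, (k : nat) = n.-1 -> (s k : nat) = 0) /\
  (forall j : 'I_n, (s j : nat) = n.-1 -> 1 <= (j : nat) <= n - 3 ->
     forall k : 'I_n, (k : nat) = 0 -> (s k : nat) = n - 2).
Proof.
move=> n_ge3 shallow_s avoid_s.
have n_gt0 : 0 < n by lia.
have lt_last : n.-1 < n by lia.
have lt_second : n - 2 < n by lia.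
pose z := Ordinal n_gt0; pose p := Ordinal lt_last.
have sj_p (j : 'I_n) : (s j : nat) = n.-1 -> s j = p by move=> ?; apply: ord_inj.
split=> j /sj_p sj /andP[j_gt0 le_j] k k_def.
- rewrite (_ : k = p); last exact: ord_inj.
  by apply: (shallow132_last_value shallow_s avoid_s (z := z)) sj _ => //=; lia.
- apply: (shallow132_first_value shallow_s avoid_s k_def _ (q := Ordinal lt_second)) sj _ => //=.
  lia.
Qed.
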